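(* Let $G$ be a graph and let $S\subseteq V(G)$ be a twin cover of $G$. Then there exists an imbalance optimal ordering of $G$ in which, for every connected component $C$ of $G-S$, the vertices of $C$ appear consecutively.
   Context: All graphs are finite, simple and undirected. An ordering $\sigma$ of $V(G)$ assigns to each vertex $v$ the sets $N_L(v,\sigma)$ and $N_R(v,\sigma)$ of neighbours of $v$ preceding and following $v$, respectively; $\mathcal{I}(v,\sigma)=\big||N_L(v,\sigma)|-|N_R(v,\sigma)|\big|$, $\mathcal{I}(\sigma)=\sum_v\mathcal{I}(v,\sigma)$, $\mathcal{I}(G)=\min_\sigma\mathcal{I}(\sigma)$, and $\sigma$ is imbalance optimal if $\mathcal{I}(\sigma)=\mathcal{I}(G)$. A twin cover of $G$ is a set $S\subseteq V(G)$ such that every connected component $X$ of $G-S$ is a set of true twins in $G$ ($N[u]=N[v]$ for all $u,v\in X$). *)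

From mathcomp Require Import all_boot.
Set Implicit Arguments. Unset Strict Implicit. Unset Printing Implicit Defensive.

Definition simple_graph (T : finType) (e : rel T) : Prop :=
  symmetric e /\ irreflexive e.

Definition is_ordering (T : finType) (s : seq T) : Prop := perm_eq s (enum T).

Definition NL (T : finType) (e : rel T) (s : seq T) (v : T) : {set T} :=
  [set u | e v u & index u s < index v s].
Definition NR (T : finType) (e : rel T) (s : seq T) (v : T) : {set T} :=
  [set u | e v u & index v s < index u s].

(* | |N_L| - |N_R| | as a natural number. *)
Definition imb_v (T : finType) (e : rel T) (s : seq T) (v : T) : nat :=
  maxn #|NL e s v| #|NR e s v| - minn #|NL e s v| #|NR e s v|.

Definition imbalance (T : finType) (e : rel T) (s : seq T) : nat :=
  \sum_(v : T) imb_v e s v.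

Definition imbalance_optimal (T : finType) (e : rel T) (s : seq T) : Prop :=
  is_ordering s /\ forall s', is_ordering s' -> imbalance e s <= imbalance e s'.

Definition del_rel (T : finType) (e : rel T) (S : {set T}) : rel T :=
  fun x y => [&& e x y, x \notin S & y \notin S].

Definition same_comp (T : finType) (e : rel T) (S : {set T}) (x y : T) : bool :=
  [&& x \notin S, y \notin S & connect (del_rel e S) x y].

(* S is a twin cover: every component of G - S is a set of true twins in G
   (equal closed neighbourhoods). *)
Definition twin_cover (T : finType) (e : rel T) (S : {set T}) : Prop :=
  forall u v, same_comp e S u v ->
    forall w, ((w == u) || e u w) = ((w == v) || e v w).

Definition components_consecutive (T : finType) (e : rel T) (S : {set T})
  (s : seq T) : Prop :=
  forall x y z, same_comp e S x y ->
    index x s <= index z s <= index y s -> same_comp e S x z.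

From mathcomp Require Import all_boot order ssralg ssrnum ssrint intdiv zify.
Import Order.TTheory GRing.Theory Num.Theory.

Set Implicit Arguments. Unset Strict Implicit. Unset Printing Implicit Defensive.

(* Orderings are handled through injective keys [k : T -> nat]; the balance of [v] is the
   number of neighbours before [v] minus the number after it. If true twins [c], [c'] with
   [k c < k c'] have [r] common neighbours strictly between them, then
   [bal c' = bal c + 2 + 2 r]. Moving [c] and [c'] next to each other at a point between
   them with [h] of those neighbours before it (any [h <= r] is realised, by a discrete
   intermediate value argument) turns [|x| + |x + 2 + 2r|] into [|x + 2h| + |x + 2h + 2|],
   a gain of at least [2r] for a suitable [h]; each of the [r] in-between neighbours
   changes its balance by at most 2 and no other balance changes. When those neighbours
   all lie in the twin cover [S], the sum of |balance| over [V - S] strictly drops, so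
   from an optimal ordering we reach an optimal key in which no vertex of [S] lies between
   two vertices of a component it is adjacent to. Sorting lexicographically by (least key
   of the component, key) then makes the components consecutive without reversing any
   edge, hence keeps the imbalance. *)

Lemma ltn_mulD_lex (a1 a b1 b B : nat) : a < B -> b < B ->
  (a1 * B + a < b1 * B + b) = (a1 < b1) || (a1 == b1) && (a < b).
Proof.
move=> ltaB ltbB; case: (ltngtP a1 b1) => [lt_ab|lt_ba|->] /=.
- have : a1.+1 * B <= b1 * B by rewrite leq_mul2r lt_ab orbT.
  rewrite mulSn; lia.
- have : b1.+1 * B <= a1 * B by rewrite leq_mul2r lt_ba orbT.
  rewrite mulSn; lia.
- by rewrite ltn_add2l.
Qed.

Lemma discrete_ivt (f : nat -> nat) (a b y : nat) :
  (forall i, f i.+1 <= (f i).+1) -> a <= b -> f a <= y <= f b ->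
  exists2 i, a <= i <= b & f i = y.
Proof.
move=> f_step /subnKC <-; elim: (b - a) y => [|n IHn] y.
  by rewrite addn0 => y_eq; exists a; [rewrite leqnn | apply/eqP; rewrite eqn_leq].
case: (leqP y (f (a + n))) => [le_y|lt_y] y_bounds.
  by have [i ? <-] := IHn y ltac:(lia); exists i => //; lia.
exists (a + n.+1); first lia.
by have := f_step (a + n); rewrite addnS in y_bounds *; lia.
Qed.

Lemma sum_nat_card (T : finType) (P : pred T) : \sum_u P u = #|[set u | P u]|.
Proof. by rewrite -sum1dep_card [RHS]big_mkcond; apply: eq_bigr => u _; case: (P u). Qed.

Local Open Scope ring_scope.

Lemma norm_rebalance (x : int) (r : nat) : exists2 h : nat, (h <= r)%N &
  `|x + 2 * h%:Z| + `|x + 2 * h%:Z + 2| + 2 * r%:Z <= `|x| + `|x + 2 + 2 * r%:Z|.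
Proof.
have [x_ge0|x_lt0] := boolP (0 <= x); first by exists 0%N; lia.
have [y_le0|y_gt0] := boolP (x + 2 + 2 * r%:Z <= 0); first by exists r; lia.
exists `|(- x - 1) %/ 2|%Z%N; lia.
Qed.

Lemma sum_natz (T : finType) (F : T -> nat) : (\sum_u F u)%N%:Z = \sum_u (F u)%:Z.
Proof. exact: (big_morph Posz PoszD). Qed.

Lemma bigD2 (I : finType) (F : I -> int) (P : pred I) a b : a != b -> P a -> P b ->
  \sum_(i | P i) F i = F a + F b + \sum_(i | P i && (i != a) && (i != b)) F i.
Proof.
move=> ab Pa Pb; rewrite (bigD1 a) //= (bigD1 b) /= ?addrA //.
by rewrite Pb eq_sym ab.
Qed.

Section KeyImbalance.
Variables (T : finType) (e : rel T).
Hypotheses (e_sym : symmetric e) (e_irr : irreflexive e).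

Definition key_sign (k : T -> nat) (u v : T) : int :=
  (k u < k v)%N%:Z - (k v < k u)%N%:Z.

Definition key_bal (k : T -> nat) (v : T) : int :=
  \sum_u (e v u)%:Z * key_sign k u v.

Definition key_imbalance (k : T -> nat) : int := \sum_v `|key_bal k v|.

Lemma key_sign_lt k u v : (k u < k v)%N -> key_sign k u v = 1.
Proof. by rewrite /key_sign => lt_uv; rewrite lt_uv ltnNge ltnW. Qed.

Lemma key_sign_gt k u v : (k v < k u)%N -> key_sign k u v = -1.
Proof. by rewrite /key_sign => lt_vu; rewrite lt_vu ltnNge ltnW. Qed.

Lemma key_balE k v : key_bal k v =
  #|[set u | e v u & (k u < k v)%N]|%:Z - #|[set u | e v u & (k v < k u)%N]|%:Z.
Proof.
rewrite -!sum_nat_card !sum_natz -sumrB; apply: eq_bigr => u _; rewrite /key_sign.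
by case: (e v u); rewrite ?mul1r ?mul0r ?subrr.
Qed.

Lemma imbalance_index (s : seq T) : (imbalance e s)%:Z = key_imbalance (index^~ s).
Proof.
rewrite /imbalance /key_imbalance sum_natz; apply: eq_bigr => v _.
rewrite key_balE /imb_v /NL /NR; lia.
Qed.

Lemma eq_key_bal k1 k2 v :
  (forall u, e v u ->
     (k1 u < k1 v)%N = (k2 u < k2 v)%N /\ (k1 v < k1 u)%N = (k2 v < k2 u)%N) ->
  key_bal k1 v = key_bal k2 v.
Proof.
move=> eq_order; apply: eq_bigr => u _.
have [e_vu|_] := boolP (e v u); last by rewrite !mul0r.
by rewrite /key_sign; case: (eq_order u e_vu) => -> ->.
Qed.

Lemma eq_key_imbalance k1 k2 : (forall u v, (k1 u < k1 v)%N = (k2 u < k2 v)%N) ->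
  key_imbalance k1 = key_imbalance k2.
Proof. by move=> same_order; apply: eq_bigr => v _; rewrite (@eq_key_bal k1 k2). Qed.

Definition true_twins (x y : T) := forall w, (w == x) || e x w = (w == y) || e y w.

Lemma twins_adj x y : true_twins x y -> x != y -> e x y.
Proof. by move=> /(_ y); rewrite eqxx eq_sym => + /negbTE xy; rewrite xy. Qed.

Lemma twins_nbhd x y w : true_twins x y -> w != x -> w != y -> e x w = e y w.
Proof. by move=> /(_ w) + /negbTE wx /negbTE wy; rewrite wx wy. Qed.

Lemma key_bal_twins k c c' : injective k -> true_twins c c' -> (k c < k c')%N ->
  key_bal k c' = key_bal k c + 2 + 2 * (\sum_u (e c u && (k c < k u < k c')%N))%N%:Z.
Proof.
move=> k_inj tw lt_cc'.
have cc' : c != c' by apply: contraTneq lt_cc' => ->; rewrite ltnn.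
have e_cc' := twins_adj tw cc'.
suff : key_bal k c' - key_bal k c = \sum_u ((u == c)%:Z + (u == c')%:Z
     + 2 * (e c u && (k c < k u < k c')%N)%:Z).
  have sum_eq1 (a : T) : \sum_u (u == a)%:Z = 1 :> int.
    by rewrite (bigD1 a) //= eqxx big1 // => u /negbTE->.
  rewrite !big_split /= !sum_eq1 -mulr_sumr -sum_natz; lia.
rewrite -sumrB; apply: eq_bigr => u _.
have [->|uc] := eqVneq u c.
  by rewrite e_irr e_sym e_cc' (negbTE cc') (key_sign_lt lt_cc'); lia.
have [->|uc'] := eqVneq u c'.
  by rewrite e_irr e_cc' ltnn andbF (key_sign_gt lt_cc'); lia.
rewrite -(twins_nbhd tw uc uc') /=; case: (e c u); last by rewrite /= !mul0r subrr.
have kuc : k u != k c by apply: contra uc => /eqP/k_inj ->.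
have kuc' : k u != k c' by apply: contra uc' => /eqP/k_inj ->.
rewrite /key_sign; lia.
Qed.

Section MergeTwins.
Variables (k : T -> nat) (c c' : T).
Hypotheses (k_inj : injective k) (tw : true_twins c c') (lt_cc' : (k c < k c')%N).

Let cc' : c != c'. Proof. by apply: contraTneq lt_cc' => ->; rewrite ltnn. Qed.
Let e_cc' : e c c'. Proof. exact: twins_adj tw cc'. Qed.
Let k_neq u v : u != v -> k u != k v.
Proof. by move=> uv; apply: contra uv => /eqP/k_inj ->. Qed.

Definition between u := e c u && (k c < k u < k c')%N.

Definition nbrs_upto i := (\sum_u (e c u && (k c < k u <= i)%N))%N.

(* Scaling the other keys by 3 leaves room to put [c] and [c'] just after every key [<= i]. *)
Definition merge_key i u :=
  if u == c then (3 * i + 1)%N else if u == c' then (3 * i + 2)%N else (3 * k u)%N.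

Lemma merge_key_c i : merge_key i c = (3 * i + 1)%N.
Proof. by rewrite /merge_key eqxx. Qed.

Lemma merge_key_c' i : merge_key i c' = (3 * i + 2)%N.
Proof. by rewrite /merge_key eq_sym (negbTE cc') eqxx. Qed.

Lemma merge_key_other i u : u != c -> u != c' -> merge_key i u = (3 * k u)%N.
Proof. by rewrite /merge_key => /negbTE-> /negbTE->. Qed.

Lemma merge_key_inj i : injective (merge_key i).
Proof.
have key_cases x : [\/ x = c /\ merge_key i x = (3 * i + 1)%N,
    x = c' /\ merge_key i x = (3 * i + 2)%N | merge_key i x = (3 * k x)%N].
  have [->|xc] := eqVneq x c; first by apply: Or31; rewrite merge_key_c.
  have [->|xc'] := eqVneq x c'; first by apply: Or32; rewrite merge_key_c'.
  by apply: Or33; rewrite merge_key_other.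
move=> x y; case: (key_cases x) => [[-> ->]|[-> ->]|->];
  case: (key_cases y) => [[-> ->]|[-> ->]|->] // eq_key; try lia.
by apply: k_inj; lia.
Qed.

Lemma key_bal_merge_c i : (k c <= i < k c')%N ->
  key_bal (merge_key i) c = key_bal k c + 2 * (nbrs_upto i)%:Z.
Proof.
move=> i_bounds.
suff : key_bal (merge_key i) c - key_bal k c = 2 * (nbrs_upto i)%:Z by lia.
rewrite -sumrB sum_natz mulr_sumr; apply: eq_bigr => u _.
have [->|uc] := eqVneq u c; first by rewrite e_irr; lia.
have [->|uc'] := eqVneq u c'.
  by rewrite e_cc' /key_sign merge_key_c merge_key_c'; lia.
have := k_neq uc; rewrite /key_sign merge_key_c merge_key_other //.
by case: (e c u) => /=; lia.
Qed.

Lemma key_bal_merge_c' i : key_bal (merge_key i) c' = key_bal (merge_key i) c + 2.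
Proof.
have lt_merge : (merge_key i c < merge_key i c')%N by rewrite merge_key_c merge_key_c'; lia.
rewrite (key_bal_twins (@merge_key_inj i) tw lt_merge) big1 ?mulr0 ?addr0 // => u _.
have [->|uc] := eqVneq u c; first by rewrite e_irr.
have [->|uc'] := eqVneq u c'; first by rewrite ltnn !andbF.
by rewrite merge_key_c merge_key_c' merge_key_other //; case: (e c u) => //=; lia.
Qed.

Lemma key_bal_merge_other i v : (k c <= i < k c')%N -> v != c -> v != c' ->
  key_bal (merge_key i) v - key_bal k v =
  (e c v)%:Z * (key_sign (merge_key i) c v - key_sign k c v
                + key_sign (merge_key i) c' v - key_sign k c' v).
Proof.
move=> i_bounds vc vc'; rewrite -sumrB (bigD2 _ (P := predT) cc') //=.
rewrite big1 ?addr0.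
  by rewrite !(e_sym v) -(twins_nbhd tw vc vc'); case: (e c v) => /=; lia.
by move=> u /andP[uc uc']; rewrite /key_sign !merge_key_other //; lia.
Qed.

Lemma key_bal_merge_between i v : (k c <= i < k c')%N -> between v ->
  `|key_bal (merge_key i) v| <= `|key_bal k v| + 2.
Proof.
move=> i_bounds /andP[e_cv v_bounds].
have vc : v != c by apply: contraTneq v_bounds => ->; rewrite ltnn.
have vc' : v != c' by apply: contraTneq v_bounds => ->; rewrite ltnn andbF.
have := key_bal_merge_other i_bounds vc vc'.
by rewrite e_cv /key_sign merge_key_c merge_key_c' merge_key_other //; lia.
Qed.

Lemma key_bal_merge_outside i v : (k c <= i < k c')%N -> v != c -> v != c' ->
  ~~ between v -> key_bal (merge_key i) v = key_bal k v.
Proof.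
move=> i_bounds vc vc' /negbTE not_between; have := key_bal_merge_other i_bounds vc vc'.
have := k_neq vc; have := k_neq vc'; move: not_between.
rewrite /between /key_sign merge_key_c merge_key_c' merge_key_other //.
by case: (e c v) => /=; lia.
Qed.

Lemma nbrs_upto_step i : (nbrs_upto i.+1 <= (nbrs_upto i).+1)%N.
Proof.
have at_most_one : (\sum_u (k u == i.+1) <= 1)%N.
  rewrite sum_nat_card; apply/card_le1_eqP => x y; rewrite !inE => /eqP kx /eqP ky.
  by apply: k_inj; rewrite kx ky.
apply: leq_trans (_ : nbrs_upto i + \sum_u (k u == i.+1) <= _)%N; last lia.
by rewrite /nbrs_upto -big_split /=; apply: leq_sum => u _; case: (e c u) => /=; lia.
Qed.

Lemma merge_twins : exists2 i, (k c <= i < k c')%N &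
  key_imbalance (merge_key i) <= key_imbalance k /\
  `|key_bal (merge_key i) c| + `|key_bal (merge_key i) c'| + 2 * (\sum_u between u)%N%:Z
    <= `|key_bal k c| + `|key_bal k c'|.
Proof.
set r := (\sum_u between u)%N.
have [h le_hr rebalance] := norm_rebalance (key_bal k c) r.
have nbrs_first : nbrs_upto (k c) = 0%N.
  by rewrite /nbrs_upto big1 // => u _; apply/eqP; rewrite eqb0; lia.
have nbrs_last : nbrs_upto (k c').-1 = r.
  by apply: eq_bigr => u _; rewrite /between; case: (e c u) => //=; lia.
have [i i_bounds nbrs_i] : exists2 i, (k c <= i <= (k c').-1)%N & nbrs_upto i = h.
  by apply: discrete_ivt nbrs_upto_step _ _; lia.
have {}i_bounds : (k c <= i < k c')%N by lia.
have bal_c' := key_bal_twins k_inj tw lt_cc'.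
have bal'_c := key_bal_merge_c i_bounds; have bal'_c' := key_bal_merge_c' i.
have local_gain : `|key_bal (merge_key i) c| + `|key_bal (merge_key i) c'| + 2 * r%:Z
    <= `|key_bal k c| + `|key_bal k c'|.
  by rewrite bal'_c' bal'_c bal_c' nbrs_i.
exists i => //; split => //.
rewrite /key_imbalance (bigD2 _ (P := predT) cc') //.
rewrite [X in _ <= X](bigD2 _ (P := predT) cc') //=.
have between_c : ~~ between c by rewrite /between e_irr.
have between_c' : ~~ between c' by rewrite /between ltnn !andbF.
have sum_between : \sum_(v | (v != c) && (v != c')) (between v)%:Z = r%:Z.
  rewrite sum_natz (bigD2 _ (P := predT) cc') //=.
  by rewrite (negbTE between_c) (negbTE between_c') !add0r.
suff : \sum_(v | (v != c) && (v != c')) `|key_bal (merge_key i) v|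
    <= \sum_(v | (v != c) && (v != c')) (`|key_bal k v| + 2 * (between v)%:Z).
  rewrite big_split -mulr_sumr sum_between /=; move: local_gain.
  by set rest' := \sum_(_ | _) _; set rest := \sum_(_ | _) _; lia.
apply: ler_sum => v /andP[vc vc']; have [in_between|out] := boolP (between v).
  by rewrite mulr1; exact: key_bal_merge_between.
by rewrite key_bal_merge_outside // mulr0 addr0.
Qed.

End MergeTwins.

Section TwinCover.
Variable S : {set T}.
Hypothesis twin_cover_S : twin_cover e S.

Local Notation sc := (same_comp e S).

Lemma same_comp_notin x y : sc x y -> (x \notin S) && (y \notin S).
Proof. by case/and3P=> -> ->. Qed.

Lemma same_comp_sym x y : sc x y -> sc y x.
Proof.
have del_sym : connect_sym (del_rel e S).
  by apply: sym_connect_sym => u v; rewrite /del_rel e_sym [_ && (v \notin S)]andbC.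
by case/and3P=> xS yS xy; rewrite /same_comp xS yS del_sym.
Qed.

Lemma same_comp_trans x y z : sc x y -> sc y z -> sc x z.
Proof.
by case/and3P=> xS _ xy /and3P[_ zS yz]; rewrite /same_comp xS zS (connect_trans xy yz).
Qed.

Lemma same_comp_refl x : x \notin S -> sc x x.
Proof. by move=> xS; rewrite /same_comp xS connect0. Qed.

Lemma same_comp_edge x y : e x y -> x \notin S -> y \notin S -> sc x y.
Proof. by move=> xy xS yS; rewrite /same_comp xS yS connect1 // /del_rel xy xS yS. Qed.

Definition comp_imbalance k : int := \sum_(v | v \notin S) `|key_bal k v|.

Lemma comp_imbalance_ge0 k : 0 <= comp_imbalance k.
Proof. by apply: sumr_ge0 => v _; rewrite normr_ge0. Qed.

Lemma comp_imbalance_merge k c c' : injective k -> sc c c' -> (k c < k c')%N ->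
  (forall u, between k c c' u -> u \in S) -> (0 < \sum_u between k c c' u)%N ->
  exists k', [/\ injective k', key_imbalance k' <= key_imbalance k &
                 comp_imbalance k' < comp_imbalance k].
Proof.
move=> k_inj cc' lt_cc' between_S r_gt0.
have cc'_neq : c != c' by apply: contraTneq lt_cc' => ->; rewrite ltnn.
have /andP[cS c'S] := same_comp_notin cc'.
have tw := twin_cover_S cc'.
have [i i_bounds [le_imb local_gain]] := merge_twins k_inj tw lt_cc'.
exists (merge_key k c c' i); split => //.
  exact: (merge_key_inj k_inj tw lt_cc' (i := i)).
rewrite /comp_imbalance (bigD2 _ (P := fun v => v \notin S) cc'_neq) //.
rewrite [X in _ < X](bigD2 _ (P := fun v => v \notin S) cc'_neq) //.
have -> : \sum_(v | (v \notin S) && (v != c) && (v != c')) `|key_bal (merge_key k c c' i) v|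
        = \sum_(v | (v \notin S) && (v != c) && (v != c')) `|key_bal k v|.
  apply: eq_bigr => v /andP[/andP[vS vc] vc'].
  by rewrite key_bal_merge_outside //; apply: contra vS => /between_S.
by rewrite ltrD2r; lia.
Qed.

Definition splits k c1 c2 w := [&& sc c1 c2, e c1 w, w \in S & (k c1 < k w < k c2)%N].

Lemma splits_decrease k c1 c2 w : injective k -> splits k c1 c2 w ->
  exists k', [/\ injective k', key_imbalance k' <= key_imbalance k &
                 comp_imbalance k' < comp_imbalance k].
Proof.
move=> k_inj /and4P[c12 e_c1w wS /andP[lt_c1w lt_wc2]].
have /andP[c1S _] := same_comp_notin c12.
have before : sc c1 c1 && (k c1 < k w)%N by rewrite same_comp_refl.
have after : sc c1 c2 && (k w < k c2)%N by rewrite c12.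
case: (@arg_maxnP _ c1 (fun u => sc c1 u && (k u < k w)%N) k before)
  => c /andP[c1c lt_cw] c_max.
case: (@arg_minnP _ c2 (fun u => sc c1 u && (k w < k u)%N) k after)
  => c' /andP[c1c' lt_wc'] c'_min.
have cc' : sc c c' := same_comp_trans (same_comp_sym c1c) c1c'.
have /andP[_ cS] := same_comp_notin c1c.
apply: (comp_imbalance_merge k_inj cc' (ltn_trans lt_cw lt_wc')).
  move=> u /and3P[e_cu lt_cu lt_uc']; apply: contraT => uS.
  have c1u : sc c1 u := same_comp_trans c1c (same_comp_edge e_cu cS uS).
  case: (ltngtP (k u) (k w)) => [lt_uw|lt_wu|/k_inj eq_uw].
  - by have := c_max u; rewrite c1u lt_uw /= leqNgt lt_cu => /(_ isT).
  - by have := c'_min u; rewrite c1u lt_wu /= leqNgt lt_uc' => /(_ isT).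
  - by rewrite eq_uw wS in uS.
have w_c1 : w != c1 by apply: contraTneq wS => ->.
have w_c : w != c by apply: contraTneq wS => ->.
have e_cw : e c w by rewrite -(twins_nbhd (twin_cover_S c1c) w_c1 w_c).
by rewrite (bigD1 w) //= /between e_cw lt_cw lt_wc'.
Qed.

Lemma exists_unsplit_key k : injective k ->
  exists2 k', injective k' &
    key_imbalance k' <= key_imbalance k /\ forall c1 c2 w, ~~ splits k' c1 c2 w.
Proof.
have [n] := ubnP `|comp_imbalance k|%N; elim: n k => [|n IHn] k; first by rewrite ltn0.
move=> lt_kn k_inj.
case: (pickP (fun t : T * T * T => splits k t.1.1 t.1.2 t.2))
  => [[[c1 c2] w] k_splits|unsplit].
  have [k1 [k1_inj le_imb lt_comp]] := splits_decrease k_inj k_splits.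
  have lt_k1n : (`|comp_imbalance k1| < n)%N.
    by have := comp_imbalance_ge0 k1; have := comp_imbalance_ge0 k; lia.
  have [k' k'_inj [le_imb' unsplit]] := IHn k1 lt_k1n k1_inj.
  by exists k' => //; split => //; apply: le_trans le_imb' le_imb.
by exists k => //; split => // c1 c2 w; rewrite (unsplit (c1, c2, w)).
Qed.

Section BlockKey.
Variable k : T -> nat.
Hypotheses (k_inj : injective k) (unsplit : forall c1 c2 w, ~~ splits k c1 c2 w).

Definition comp_first v := if v \in S then k v else k [arg min_(u < v | sc v u) k u].

Lemma comp_first_in v : v \in S -> comp_first v = k v.
Proof. by rewrite /comp_first => ->. Qed.

Lemma comp_firstP v : v \notin S ->
  exists2 a, sc v a & comp_first v = k a /\ forall u, sc v u -> (k a <= k u)%N.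
Proof.
move=> vS; rewrite /comp_first (negbTE vS).
by case: (@arg_minnP _ v (sc v) k (same_comp_refl vS)) => a va a_min; exists a.
Qed.

Lemma comp_first_eq x y : sc x y -> comp_first x = comp_first y.
Proof.
move=> xy; have /andP[xS yS] := same_comp_notin xy.
have [a xa [-> a_min]] := comp_firstP xS; have [b yb [-> b_min]] := comp_firstP yS.
have := a_min b (same_comp_trans xy yb).
by have := b_min a (same_comp_trans (same_comp_sym xy) xa); lia.
Qed.

Lemma comp_first_edge v u : e v u -> v \notin S -> u \in S ->
  [/\ comp_first v != k u, (k u < k v)%N = (k u < comp_first v)%N
    & (k v < k u)%N = (comp_first v < k u)%N].
Proof.
move=> e_vu vS uS; have [a va [-> a_min]] := comp_firstP vS.
have uv : u != v by apply: contraTneq e_vu => ->; rewrite e_irr.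
have kuv : k u != k v by apply: contra uv => /eqP/k_inj ->.
have au : a != u by apply: contraTneq uS => <-; case/andP: (same_comp_notin va).
have e_au : e a u.
  have [-> //|_] := eqVneq a v.
  by rewrite -(twins_nbhd (twin_cover_S va) uv) // eq_sym.
have kau : k a != k u by apply: contra au => /eqP/k_inj ->.
have := a_min v (same_comp_refl vS); have := unsplit a v u.
rewrite /splits same_comp_sym // e_au uS /= => not_between le_av.
by case/nandP: not_between; rewrite -!leqNgt => ?; split => //; apply/idP/idP; lia.
Qed.

Let B := (\sum_u k u).+1.

Let k_lt_B u : (k u < B)%N.
Proof. by rewrite ltnS (bigD1 u) //= leq_addr. Qed.

Definition block_key v := (comp_first v * B + k v)%N.

Lemma block_key_ltE u v : (block_key u < block_key v)%N =
  (comp_first u < comp_first v)%N || (comp_first u == comp_first v) && (k u < k v)%N.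
Proof. exact: ltn_mulD_lex. Qed.

Lemma block_key_inj : injective block_key.
Proof.
move=> u v eq_uv; apply: k_inj.
by have := congr1 (modn^~ B) eq_uv; rewrite /block_key !modnMDl !modn_small.
Qed.

Lemma block_key_edge u v : e v u -> (block_key u < block_key v)%N = (k u < k v)%N.
Proof.
move=> e_vu; rewrite block_key_ltE.
have uv : u != v by apply: contraTneq e_vu => ->; rewrite e_irr.
have kuv : k u != k v by apply: contra uv => /eqP/k_inj ->.
have [uS|uS] := boolP (u \in S); have [vS|vS] := boolP (v \in S).
- by rewrite !comp_first_in //; lia.
- have [neq_uv lt_uv _] := comp_first_edge e_vu vS uS.
  by rewrite (comp_first_in uS) lt_uv; apply/idP/idP; lia.
- have e_uv : e u v by rewrite e_sym.
  have [neq_vu _ lt_uv] := comp_first_edge e_uv uS vS.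
  by rewrite (comp_first_in vS) lt_uv; apply/idP/idP; lia.
- by rewrite (comp_first_eq (same_comp_edge e_vu vS uS)) ltnn eqxx.
Qed.

Lemma key_imbalance_block_key : key_imbalance block_key = key_imbalance k.
Proof.
apply: eq_bigr => v _; congr `|_|; apply: eq_key_bal => u e_vu.
by rewrite !block_key_edge // e_sym.
Qed.

Lemma block_key_consecutive x y z : sc x y ->
  (block_key x <= block_key z <= block_key y)%N -> sc x z.
Proof.
move=> xy /andP[le_xz le_zy]; have /andP[xS _] := same_comp_notin xy.
have le_first u v : (block_key u <= block_key v)%N -> (comp_first u <= comp_first v)%N.
  by rewrite leqNgt block_key_ltE negb_or -leqNgt => /andP[].
have first_z : comp_first z = comp_first x.
  apply/eqP; rewrite eqn_leq (le_first _ _ le_xz) andbT.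
  by rewrite (comp_first_eq xy) le_first.
have [a xa [first_x _]] := comp_firstP xS.
have [zS|zS] := boolP (z \in S).
  move: first_z; rewrite comp_first_in // first_x => /k_inj eq_za.
  by move: xa; rewrite -eq_za => /same_comp_notin/andP[_]; rewrite zS.
have [b zb [first_z' _]] := comp_firstP zS.
move: first_z; rewrite first_z' first_x => /k_inj eq_ba.
by apply: same_comp_trans xa _; rewrite -eq_ba; apply: same_comp_sym.
Qed.

End BlockKey.

End TwinCover.
End KeyImbalance.

Local Close Scope ring_scope.

Lemma mem_ordering (T : finType) (s : seq T) x : is_ordering s -> x \in s.
Proof. by move=> s_ord; rewrite (perm_mem s_ord) mem_enum. Qed.

Lemma index_ordering_inj (T : finType) (s : seq T) : is_ordering s -> injective (index^~ s).
Proof.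
by move=> s_ord x y; apply: (index_inj x (mem_ordering x s_ord) (mem_ordering y s_ord)).
Qed.

Lemma ordering_of_key (T : finType) (k : T -> nat) : injective k ->
  exists2 s : seq T, is_ordering s & forall x y, (index x s < index y s) = (k x < k y).
Proof.
move=> k_inj; set s := sort (relpre k leq) (enum T).
have s_ord : is_ordering s by rewrite /is_ordering perm_sort.
have mem_s x : x \in s := mem_ordering x s_ord.
have s_sorted : sorted (relpre k leq) s by apply: sort_sorted => x y; apply: leq_total.
have k_trans : transitive (relpre k leq) by move=> ? ? ?; apply: leq_trans.
have le_index x y : (index x s < index y s) -> k x <= k y.
  exact: (sorted_ltn_index k_trans s_sorted x y (mem_s x) (mem_s y)).
exists s => // x y; have [->|xy] := eqVneq x y; first by rewrite !ltnn.
have kxy : k x != k y by apply: contra xy => /eqP/k_inj ->.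
have index_xy : index x s != index y s.
  by apply: contra xy => /eqP/(index_ordering_inj s_ord) ->.
have := le_index x y; have := le_index y x; lia.
Qed.

Lemma exists_imbalance_optimal (T : finType) (e : rel T) : exists s, imbalance_optimal e s.
Proof.
have has_imbalance : exists n, has (fun s => imbalance e s == n) (permutations (enum T)).
  by exists (imbalance e (enum T)); apply/hasP; exists (enum T); rewrite ?mem_permutations.
case: (ex_minnP has_imbalance) => n /hasP[s s_perm /eqP s_imb] s_min.
exists s; split; first by rewrite /is_ordering -mem_permutations.
move=> s' s'_ord; rewrite s_imb; apply: s_min; apply/hasP; exists s' => //.
by rewrite mem_permutations.
Qed.

Theorem corollary1 (T : finType) (e : rel T) (S : {set T}) :
  simple_graph e -> twin_cover e S ->
  exists s : seq T, imbalance_optimal e s /\ components_consecutive e S s.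
Proof.
move=> [e_sym e_irr] tc.
have [s0 [s0_ord s0_opt]] := exists_imbalance_optimal e.
have s0_inj := index_ordering_inj s0_ord.
have [k k_inj [le_imb unsplit]] := exists_unsplit_key e_sym e_irr tc s0_inj.
have [s s_ord s_index] := ordering_of_key (block_key_inj (e := e) (S := S) k_inj).
exists s; split.
  split => // s' s'_ord; apply: leq_trans (s0_opt s' s'_ord).
  rewrite -lez_nat !imbalance_index (eq_key_imbalance e s_index).
  by rewrite (key_imbalance_block_key e_sym e_irr tc k_inj unsplit).
have s_le x y : (index x s <= index y s) = (block_key e S k x <= block_key e S k y).
  by rewrite leqNgt s_index -leqNgt.
by move=> x y z xy; rewrite !s_le; exact: (block_key_consecutive e_sym k_inj xy).
Qed.
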